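(* Let $N\ge2$, $r\ge1$ and $c>0$. The set ${}^c\mathcal L^{N,r}_{\mathbf m,\mathbf p}$ of all matrices $\mathbf D\in\mathbb R^{m\times p}$ that can be written as $\mathbf D=\sum_{k=1}^r\mathbf D^k_1\otimes\cdots\otimes\mathbf D^k_N$ with $\mathbf D^k_n\in\mathbb R^{m_n\times p_n}$ and $\|\mathbf D^k_1\otimes\cdots\otimes\mathbf D^k_N\|_F\le c$ for every $k\in[r]$ is closed in $\mathbb R^{m\times p}$.
   Context: $m=\prod_{n=1}^N m_n$, $p=\prod_{n=1}^N p_n$; $\otimes$ denotes the Kronecker product and $\|\cdot\|_F$ the Frobenius norm. *)

From HB Require Import structures.
From mathcomp Require Import all_boot all_order all_algebra.
From mathcomp Require Import all_classical all_reals all_analysis.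
From mathcomp Require Import mxtens.
Set Implicit Arguments. Unset Strict Implicit. Unset Printing Implicit Defensive.
Import Order.TTheory GRing.Theory Num.Theory.
Import numFieldNormedType.Exports.
Local Open Scope ring_scope.

Fixpoint prodd (N : nat) (m : nat -> nat) : nat :=
  match N with
  | 0 => 1%N
  | N'.+1 => (prodd N' m * m N')%N
  end.

(* Iterated Kronecker product D 0 ⊗ D 1 ⊗ ... ⊗ D (N-1)
   (the factors D n for n >= N are ignored). *)
Fixpoint kronN (R : pzRingType) (m p : nat -> nat) (N : nat)
  (D : forall n : nat, 'M[R]_(m n, p n)) : 'M[R]_(prodd N m, prodd N p) :=
  match N return 'M[R]_(prodd N m, prodd N p) with
  | 0 => (1%:M : 'M[R]_1)
  | N'.+1 => @kronN R m p N' D *t D N'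
  end.

Definition frob (R : rcfType) (a b : nat) (A : 'M[R]_(a, b)) : R :=
  Num.sqrt (\sum_(i < a) \sum_(j < b) A i j ^+ 2).

Definition bounded_low_rank_set (R : realType) (N r : nat) (m p : nat -> nat)
  (c : R) : set 'M[R]_(prodd N m, prodd N p) :=
  [set D | exists Ds : 'I_r -> forall n : nat, 'M[R]_(m n, p n),
     D = \sum_(k < r) @kronN R m p N (Ds k) /\
     forall k : 'I_r, frob (@kronN R m p N (Ds k)) <= c].

From HB Require Import structures.
From mathcomp Require Import all_boot all_order all_algebra.
From mathcomp Require Import all_classical all_reals all_analysis.
From mathcomp Require Import mxtens.
Import Order.TTheory GRing.Theory Num.Theory.
Import numFieldNormedType.Exports.
Set Implicit Arguments. Unset Strict Implicit. Unset Printing Implicit Defensive.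
Local Open Scope classical_set_scope.
Local Open Scope ring_scope.

(* Since the Frobenius norm is multiplicative for Kronecker products, the
   factors of a term D_1 ⊗ ... ⊗ D_N with ||D_1 ⊗ ... ⊗ D_N||_F <= c can be
   rescaled (by scalars of product 1) so that D_1, ..., D_(N-1) have norm at
   most 1 and D_N absorbs the whole norm; then every entry of every factor lies
   in [-(1 + c), 1 + c].  Hence the set is the image of a compact set (a box of
   factor entries, by Tychonoff, cut down by the closed constraints on the
   norms) under the continuous map (D^k_n) |-> sum_k D^k_1 ⊗ ... ⊗ D^k_N; it
   is therefore compact, hence closed. *)

Section Frobenius.
Variable R : rcfType.

Lemma sumsqr_mx_ge0 a b (A : 'M[R]_(a, b)) : 0 <= \sum_i \sum_j A i j ^+ 2.
Proof. by apply: sumr_ge0 => i _; apply: sumr_ge0 => j _; exact: sqr_ge0. Qed.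

Lemma frob_ge0 a b (A : 'M[R]_(a, b)) : 0 <= frob A.
Proof. exact: sqrtr_ge0. Qed.

Lemma frob_eq0 a b (A : 'M[R]_(a, b)) : frob A = 0 -> A = 0.
Proof.
move=> /eqP; rewrite sqrtr_eq0 => A0.
have {A0}/eqP : \sum_i \sum_j A i j ^+ 2 = 0.
  by apply/eqP; rewrite eq_le A0 sumsqr_mx_ge0.
rewrite psumr_eq0 => [/allP Arow0|i _]; last first.
  by apply: sumr_ge0 => j _; exact: sqr_ge0.
apply/matrixP => i j; rewrite mxE; apply/eqP; rewrite -sqrf_eq0.
move: (Arow0 i (mem_index_enum i)); rewrite psumr_eq0 => [/allP|j' _].
  by move/(_ j (mem_index_enum j)).
exact: sqr_ge0.
Qed.

Lemma norm_entry_le_frob a b (A : 'M[R]_(a, b)) i j : `|A i j| <= frob A.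
Proof.
rewrite /frob -sqrtr_sqr ler_sqrt ?sumsqr_mx_ge0 //.
apply: le_trans (_ : \sum_j' A i j' ^+ 2 <= _).
  by rewrite (bigD1 j) //= lerDl; apply: sumr_ge0 => *; exact: sqr_ge0.
rewrite [leRHS](bigD1 i) //= lerDl; apply: sumr_ge0 => i' _.
by apply: sumr_ge0 => *; exact: sqr_ge0.
Qed.

Lemma frobZ a b (s : R) (A : 'M[R]_(a, b)) : frob (s *: A) = `|s| * frob A.
Proof.
rewrite /frob -sqrtr_sqr -sqrtrM ?sqr_ge0 // mulr_sumr; congr Num.sqrt.
apply: eq_bigr => i _; rewrite mulr_sumr.
by apply: eq_bigr => j _; rewrite mxE exprMn.
Qed.

Lemma frob_tens a b a' b' (A : 'M[R]_(a, b)) (B : 'M[R]_(a', b')) :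
  frob (A *t B) = frob A * frob B.
Proof.
rewrite /frob -sqrtrM ?sumsqr_mx_ge0 // mulr_sum; congr Num.sqrt.
apply: eq_bigr => i _; rewrite mulr_sum.
by apply: eq_bigr => j _; rewrite !mxE exprMn.
Qed.

End Frobenius.

Section KroneckerProduct.
Variables (m p : nat -> nat).

Lemma eq_kronN (R : pzRingType) N (D D' : forall n, 'M[R]_(m n, p n)) :
  (forall n, (n < N)%N -> D n = D' n) -> kronN N D = kronN N D'.
Proof.
elim: N => [//|N IH] eqD /=.
by rewrite (eqD N) // IH // => n ltnN; rewrite eqD // ltnW.
Qed.

Lemma tensmxZl (R : comPzRingType) a b a' b' (s : R)
    (A : 'M[R]_(a, b)) (B : 'M[R]_(a', b')) :
  (s *: A) *t B = s *: (A *t B).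
Proof. by apply/matrixP => i j; rewrite !mxE mulrA. Qed.

Lemma tensmxZr (R : comPzRingType) a b a' b' (s : R)
    (A : 'M[R]_(a, b)) (B : 'M[R]_(a', b')) :
  A *t (s *: B) = s *: (A *t B).
Proof. by apply/matrixP => i j; rewrite !mxE mulrCA. Qed.

Lemma kronNZ (R : comPzRingType) N (s : nat -> R)
    (D : forall n, 'M[R]_(m n, p n)) :
  kronN N (fun n => s n *: D n) = (\prod_(n < N) s n) *: kronN N D.
Proof.
elim: N => [|N IH] /=; first by rewrite big_ord0 scale1r.
by rewrite IH tensmxZl tensmxZr big_ord_recr scalerA.
Qed.

Lemma frob_kronN (R : rcfType) N (D : forall n, 'M[R]_(m n, p n)) :
  frob (kronN N D) = \prod_(n < N) frob (D n).
Proof.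
elim: N => [|N IH] /=; last by rewrite frob_tens IH big_ord_recr.
by rewrite big_ord0 /frob !big_ord1 mxE expr1n sqrtr1.
Qed.

(* The first N-1 factors are divided by their norms; thanks to the convention
   0^-1 = 0 no case split on vanishing factors is needed: if one of them
   vanishes, then so does the whole product. *)
Lemma kronN_balance (R : rcfType) N (D : forall n, 'M[R]_(m n, p n)) :
  (0 < N)%N ->
  exists D' : forall n, 'M[R]_(m n, p n),
    kronN N D' = kronN N D /\
    forall n i j, `|D' n i j| <= 1 + frob (kronN N D).
Proof.
case: N => // N _; set K := kronN N.+1 D.
pose t n := frob (D n).
pose s n := if (n < N)%N then (t n)^-1
            else if n == N then \prod_(l < N) t l else 0.
have frobK : frob K = \prod_(l < N) t l * t N.
  by rewrite frob_kronN big_ord_recr.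
have K_ge0 : 0 <= frob K by exact: frob_ge0.
exists (fun n => s n *: D n); split.
  rewrite kronNZ -/K big_ord_recr /= [s N]/s ltnn eqxx.
  rewrite (eq_bigr (fun l : 'I_N => (t l)^-1)) => [|l _]; last first.
    by rewrite /s ltn_ord.
  rewrite prodfV; have [T0|T0] := eqVneq (\prod_(l < N) t l) 0.
    have -> : K = 0 by apply: frob_eq0; rewrite frobK T0 mul0r.
    by rewrite scaler0.
  by rewrite mulVf // scale1r.
move=> n i j; apply: le_trans (norm_entry_le_frob _ i j) _.
rewrite frobZ -/(t n) /s; case: ltnP => _.
  rewrite normfV ger0_norm ?frob_ge0 //.
  have [->|tn0] := eqVneq (t n) 0; first by rewrite invr0 mul0r addr_ge0.
  by rewrite mulVf // lerDl.
case: eqP => [->|_]; last by rewrite normr0 mul0r addr_ge0.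
have T_ge0 : 0 <= \prod_(l < N) t l by apply: prodr_ge0 => l _; exact: frob_ge0.
by rewrite ger0_norm // -frobK lerDr.
Qed.

End KroneckerProduct.

Section Continuity.
Variable R : realType.

Lemma continuous_mx (T : topologicalType) a b (g : T -> 'M[R]_(a, b)) :
  (forall i j, continuous (fun x => g x i j)) -> continuous g.
Proof.
move=> cont_g x A [P P_nbhs sPA].
apply: (@filterS _ _ _ [set y | forall i j, P i j (g y i j)]) => [y Py|].
  exact: sPA.
apply: filter_forall => i; apply: filter_forall => j.
exact: cont_g (P_nbhs i j).
Qed.

Lemma continuous_frob a b : continuous (@frob R a b).
Proof.
move=> A; apply: continuous_comp (@sqrt_continuous R _) => /=.
apply: continuous_big => [|i _]; first exact: add_continuous.
apply: continuous_big => [|j _]; first exact: add_continuous.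
move=> B; apply: continuous_comp (@exprn_continuous R 2 _).
exact: coord_continuous.
Qed.

Lemma continuous_kronN_entry (T : topologicalType) (m p : nat -> nat) N
    (D : T -> forall n, 'M[R]_(m n, p n)) :
  (forall n i j, continuous (fun x => D x n i j)) ->
  forall i j, continuous (fun x => kronN N (D x) i j).
Proof.
move=> cont_D; elim: N => [|N IH] /= i j; first exact: cst_continuous.
rewrite -[i]mxtens_unindexK -[j]mxtens_unindexK.
case: (mxtens_unindex i) => i1 i2; case: (mxtens_unindex j) => j1 j2.
rewrite (_ : (fun x => _) = fun x => kronN N (D x) i1 j1 * D x N i2 j2).
  by move=> x; apply: cvgM; [exact: IH | exact: cont_D].
by apply: funext => x; rewrite tensmxE.
Qed.

End Continuity.

Section ClosedLowRankSet.
Variables (R : realType) (r : nat) (m p : nat -> nat).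

(* A point f encodes the factors of all r terms: entry (i, j) of the n-th
   factor of the k-th term is f (k, n, i, j); the coordinates with
   i >= m n or j >= p n are never read. *)
Definition factor_space :=
  prod_topology (fun _ : 'I_r * nat * nat * nat => (R : topologicalType)).

Definition factor (f : factor_space) (k : 'I_r) (n : nat) : 'M[R]_(m n, p n) :=
  \matrix_(i, j) f (k, n, nat_of_ord i, nat_of_ord j).

Definition factor_box (b : R) : set factor_space :=
  [set f | forall x, `[-b, b]%classic (f x)].

Lemma compact_factor_box b : compact (factor_box b).
Proof. exact: tychonoff (fun _ => @segment_compact R _ _). Qed.

Lemma factor_box_onto b (Ds : 'I_r -> forall n, 'M[R]_(m n, p n)) : 0 <= b ->
  (forall k n i j, `|Ds k n i j| <= b) ->
  exists2 f, factor_box b f & forall k n, factor f k n = Ds k n.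
Proof.
move=> b_ge0 Ds_le.
pose f (x : 'I_r * nat * nat * nat) : R :=
  let: (k, n, i, j) := x in
  if insub i : option 'I_(m n) is Some i' then
    if insub j : option 'I_(p n) is Some j' then Ds k n i' j' else 0
  else 0.
exists f => [[[[k n] i] j]|k n]; last first.
  by apply/matrixP => i j; rewrite mxE /= !valK.
rewrite /= in_itv /= -ler_norml.
case: insub => [i'|]; last by rewrite normr0.
by case: insub => [j'|]; rewrite ?normr0.
Qed.

Lemma continuous_factor_entry k n i j :
  continuous (fun f : factor_space => factor f k n i j).
Proof.
rewrite (_ : (fun f => _) = proj (k, n, nat_of_ord i, nat_of_ord j)).
  exact: proj_continuous.
by apply: funext => f; rewrite mxE.
Qed.

Variable N : nat.

Lemma continuous_kronN_factor k :
  continuous (fun f : factor_space => kronN N (factor f k)).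
Proof.
apply: continuous_mx; apply: continuous_kronN_entry => n i j.
exact: continuous_factor_entry.
Qed.

Definition low_rank_sum (f : factor_space) : 'M[R]_(prodd N m, prodd N p) :=
  \sum_(k < r) kronN N (factor f k).

Definition bounded_terms (c : R) : set factor_space :=
  [set f | forall k, frob (kronN N (factor f k)) <= c].

Lemma continuous_low_rank_sum : continuous low_rank_sum.
Proof.
apply: continuous_big => [|k _]; first exact: add_continuous.
exact: continuous_kronN_factor.
Qed.

Lemma closed_bounded_terms c : closed (bounded_terms c).
Proof.
have -> : bounded_terms c = \bigcap_(k in [set: 'I_r])
    ((fun f => frob (kronN N (factor f k))) @^-1` [set x | x <= c]).
  by apply/seteqP; split => f f_le k; [move=> _; exact: f_le | apply: f_le].
apply: closed_bigI => k _.
apply: preimage_closed => [f _|]; last exact: closed_le.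
exact: (continuous_comp (@continuous_kronN_factor k f)
  (@continuous_frob R _ _ _)).
Qed.

Lemma bounded_low_rank_set_image c : (0 < N)%N -> 0 <= c ->
  @bounded_low_rank_set R N r m p c =
  low_rank_sum @` (factor_box (1 + c) `&` bounded_terms c).
Proof.
move=> N_gt0 c_ge0; apply/seteqP; split; last first.
  by move=> _ [f [_ f_le] <-]; exists (factor f).
move=> _ [Ds [-> Ds_le]].
have /boolp.choice [Ds' Ds'E] :
    forall k, exists D' : forall n, 'M[R]_(m n, p n),
    kronN N D' = kronN N (Ds k) /\ forall n i j, `|D' n i j| <= 1 + c.
  move=> k; have [D' [D'E D'_le]] := kronN_balance (Ds k) N_gt0.
  by exists D'; split => // n i j; rewrite (le_trans (D'_le n i j)) ?lerD2l.
have [f f_box fE] :=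
  factor_box_onto (addr_ge0 ler01 c_ge0) (fun k => (Ds'E k).2).
have kronE k : kronN N (factor f k) = kronN N (Ds k).
  by rewrite -(Ds'E k).1; apply: eq_kronN => n _; exact: fE.
exists f; first by split => // k; rewrite kronE.
by apply: eq_bigr => k _; rewrite kronE.
Qed.

Lemma compact_bounded_low_rank_set c : (0 < N)%N -> 0 <= c ->
  compact (@bounded_low_rank_set R N r m p c).
Proof.
move=> N_gt0 c_ge0; rewrite bounded_low_rank_set_image //.
apply: continuous_compact.
  exact/continuous_subspaceT/continuous_low_rank_sum.
apply: compact_closedI; first exact: compact_factor_box.
exact: closed_bounded_terms.
Qed.

End ClosedLowRankSet.

Theorem corollary1 (R : realType) (N r : nat) (m p : nat -> nat) (c : R) :
  (2 <= N)%N -> (1 <= r)%N -> 0 < c ->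
  topology_structure.closed (@bounded_low_rank_set R N r m p c).
Proof.
move=> N_ge2 _ c_gt0; apply: compact_closed; first exact: norm_hausdorff.
by apply: compact_bounded_low_rank_set; [exact: leq_trans N_ge2 | exact: ltW].
Qed.
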